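(* Let $n\in\mathbb{N}$ and let $R$ be a strongly $n$-torsion clean ring. Then: (1) $R$ is a PI-ring satisfying the polynomial identity $(x^n-1)((x-1)^n-1)=0$, i.e. $(r^n-1)((r-1)^n-1)=0$ for all $r\in R$; (2) $R$ has finite characteristic $\mathrm{char}(R)=|1\cdot\mathbb{Z}|$; (3) $J(R)$ is a nil ideal of index smaller than $(\mathrm{char}(R))^n$; (4) when $n$ is odd, $R$ is a reduced ring of characteristic $2$ and $J(R)=0$; (5) if $R$ is an algebra over a field $F$, then (i) $J(R)$ is a nil ideal of index at most $n$, and (ii) either $R$ is abelian or $\mathrm{char}(F)$ divides $n$.
   Context: All rings are associative with identity. $U(R)$ is the unit group, $J(R)$ the Jacobson radical, and $\mathrm{char}(R):=|1\cdot\mathbb{Z}|$ is the cardinality of the subring generated by $1$. A decomposition $r=e+u$ with $e^2=e$, $u\in U(R)$ and $u^n=1$ is an $n$-torsion clean decomposition of $r$; it is strongly $n$-torsion clean if moreover $eu=ue$. A ring $R$ is strongly $n$-torsion clean if every element of $R$ has a strongly $n$-torsion clean decomposition and $n$ is the smallest natural number with this property. A nil ideal $I$ is nil of index $k$ if $r^k=0$ for all $r\in I$ and $k$ is the minimal natural number with this property. A ring is abelian if all its idempotents are central, and reduced if it has no nonzero nilpotent elements. *)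

From mathcomp Require Import all_boot all_order all_algebra.
Set Implicit Arguments. Unset Strict Implicit. Unset Printing Implicit Defensive.
Import GRing.Theory.
Local Open Scope ring_scope.

Section Defs.
Variable R : nzRingType.

Definition is_unit (u : R) : Prop := exists v : R, u * v = 1 /\ v * u = 1.

Definition idem (e : R) : Prop := e * e = e.

Definition strongly_ntc_decomp (n : nat) (r : R) : Prop :=
  exists e u : R, [/\ idem e, is_unit u, u ^+ n = 1, e * u = u * e & r = e + u].

Definition strongly_ntc_ring (n : nat) : Prop :=
  [/\ (0 < n)%N,
      (forall r : R, strongly_ntc_decomp n r) &
      (forall m : nat, (0 < m)%N -> (forall r : R, strongly_ntc_decomp m r) -> (n <= m)%N)].

Definition left_ideal (I : R -> Prop) : Prop :=
  [/\ I 0, (forall x y, I x -> I y -> I (x - y)) & (forall r x, I x -> I (r * x))].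

Definition maximal_left_ideal (I : R -> Prop) : Prop :=
  [/\ left_ideal I, ~ I 1 &
      forall K : R -> Prop, left_ideal K -> (forall x, I x -> K x) ->
        (forall x, K x -> I x) \/ (forall x, K x)].

Definition jacobson (x : R) : Prop :=
  forall I : R -> Prop, maximal_left_ideal I -> I x.

Definition nil_of_index (I : R -> Prop) (k : nat) : Prop :=
  (forall r, I r -> r ^+ k = 0) /\
  (forall m : nat, (forall r, I r -> r ^+ m = 0) -> (k <= m)%N).

Definition char_is (c : nat) : Prop :=
  [/\ (0 < c)%N, (c%:R : R) = 0 &
      forall m : nat, (0 < m)%N -> (m%:R : R) = 0 -> (c <= m)%N].

Definition abelian_ring : Prop :=
  forall e : R, idem e -> forall x : R, e * x = x * e.

Definition reduced_ring : Prop :=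
  forall (x : R) (k : nat), x ^+ k = 0 -> x = 0.

End Defs.

(* Write r = e + u with e an idempotent commuting with a unit u such that
   u^n = 1.  Then (1 - e) r^k = (1 - e) u^k and e (r - 1)^k = e u^k, which
   gives the identity (1); at r = 3 it yields (3^n - 1)(2^n - 1) = 0, so the
   characteristic c is finite.  For r nilpotent or in J(R) the idempotent must
   be 1, hence (r - 1)^n = 1.
   For j in J(R) this makes j^n an integer combination of 1, ..., j^(n-1), so
   the powers of j take at most c^n values; two of them coincide and, 1 - j^i
   being a unit, j^(c^n - 1) = 0.
   In characteristic p, a nilpotent x with (1 - x)^m = 1 satisfies
   x^(gcd(m, p^k)) = 0 by the Frobenius map.  This bounds the nil index of
   J(R) by n over a field, and gives reducedness for odd n, where
   -1 = (-1)^n = 1 forces p = 2.  Finally, if n is invertible, a square-zero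
   corner a = e x (1 - e) satisfies 1 = (1 - a)^n = 1 - n a, so a = 0 and
   idempotents are central. *)

From mathcomp Require Import all_boot all_order all_algebra.
From mathcomp Require Import boolp classical_sets.
Import GRing.Theory.
Local Open Scope ring_scope.
Local Open Scope classical_set_scope.

Set Implicit Arguments.
Unset Strict Implicit.

Section RingFacts.
Variable R : nzRingType.
Implicit Types (x y e u : R) (I : set R).

Lemma is_unit_expr u k : is_unit u -> is_unit (u ^+ k).
Proof.
move=> [v [uv vu]]; have cuv : GRing.comm u v by rewrite /GRing.comm uv vu.
by exists (v ^+ k); rewrite -!exprMn_comm ?uv ?vu ?expr1n //; apply: commr_sym.
Qed.

Lemma is_unit_mulr_eq0 x u : is_unit u -> x * u = 0 -> x = 0.
Proof. by move=> [v [uv _]] xu0; rewrite -[x]mulr1 -uv mulrA xu0 mul0r. Qed.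

Lemma expr_eq0_leq x i j : x ^+ i = 0 -> (i <= j)%N -> x ^+ j = 0.
Proof. by move=> xi0 /subnKC <-; rewrite exprD xi0 mul0r. Qed.

Lemma mulr_expr_eq x a b k : x * a = x * b ->
  GRing.comm a x -> GRing.comm b x -> x * a ^+ k = x * b ^+ k.
Proof.
move=> xab ax bx; elim: k => [|k IH]; first by rewrite !expr0.
have bkx : GRing.comm x (b ^+ k) by apply/commrX/commr_sym.
by rewrite !exprSr mulrA IH bkx -mulrA xab mulrA -bkx -mulrA.
Qed.

Lemma mulr_idem_compl e : idem e -> e * (1 - e) = 0.
Proof. by move=> ide; rewrite mulrBr mulr1 ide subrr. Qed.

Lemma mulr_compl_idem e : idem e -> (1 - e) * e = 0.
Proof. by move=> ide; rewrite mulrBl mul1r ide subrr. Qed.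

Lemma idem_compl e : idem e -> idem (1 - e).
Proof. by move=> ide; rewrite /idem mulrBl mul1r mulr_idem_compl // subr0. Qed.

Lemma expr_gcdn_eq1 u (a b : nat) :
  (0 < a)%N -> u ^+ a = 1 -> u ^+ b = 1 -> u ^+ gcdn a b = 1.
Proof.
move=> a_gt0 ua ub; have [k _ /dvdnP[q Eq]] := Bezoutl b a_gt0.
have : u ^+ (gcdn a b + k * b) = 1 by rewrite Eq mulnC exprM ua expr1n.
by rewrite exprD mulnC exprM ub expr1n mulr1.
Qed.

Lemma exprD_pchar_comm p x y s : p \in [pchar R] -> GRing.comm x y ->
  (x + y) ^+ (p ^ s) = x ^+ (p ^ s) + y ^+ (p ^ s).
Proof.
move=> pR cxy; elim: s => [|s IH]; first by rewrite !expn0 !expr1.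
have cxy_s : GRing.comm (x ^+ (p ^ s)) (y ^+ (p ^ s)).
  by apply/commrX/commr_sym/commrX/commr_sym.
by rewrite expnSr !exprM IH -!(pFrobenius_autE pR) pFrobenius_autD_comm.
Qed.

(* [gcdn m (p ^ k)] is a power [p ^ s], and [(1 - x) ^+ p ^ s = 1 - x ^+ p ^ s]. *)
Lemma pchar_nilpotent_expr_gcdn p x k m : p \in [pchar R] -> x ^+ k = 0 ->
  (0 < m)%N -> (1 - x) ^+ m = 1 -> x ^+ gcdn m (p ^ k) = 0.
Proof.
move=> pR xk m_gt0 xm; have p_prime := pcharf_prime pR.
have one_subX s : (1 - x) ^+ (p ^ s) = 1 + (-1) ^+ (p ^ s) * x ^+ (p ^ s).
  by rewrite exprD_pchar_comm // ?expr1n -?exprNn //; exact/commr_sym/commr1.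
have xpk : (1 - x) ^+ (p ^ k) = 1.
  rewrite one_subX (expr_eq0_leq xk) ?mulr0 ?addr0 //.
  exact/ltnW/ltn_expl/prime_gt1.
have [s _ Eg] : exists2 s, (s <= k)%N & gcdn m (p ^ k) = (p ^ s)%N.
  by apply/(dvdn_pfactor _ _ p_prime)/dvdn_gcdr.
have := expr_gcdn_eq1 m_gt0 xm xpk; rewrite Eg one_subX -[X in _ = X]addr0 => /addrI.
by move/(congr1 ( *%R ((-1) ^+ (p ^ s)))); rewrite signrMK mulr0.
Qed.

Lemma one_sub_expr_sq0 (a : R) k : a * a = 0 -> (1 - a) ^+ k = 1 - a *+ k.
Proof.
move=> aa; elim: k => [|k IH]; first by rewrite expr0 mulr0n subr0.
rewrite exprSr IH mulrBl mul1r mulrBr mulr1 mulrnAl aa mul0rn subr0 mulrS.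
by rewrite opprD addrA.
Qed.

Lemma idem_corner_sq0 e x : idem e -> (e * x * (1 - e)) * (e * x * (1 - e)) = 0.
Proof.
by move=> ide; rewrite -!mulrA [(1 - e) * _]mulrA mulr_compl_idem // !(mul0r, mulr0).
Qed.

(* [e x = e x e = x e] once both off-diagonal corners vanish. *)
Lemma abelian_of_corners :
  (forall e x, idem e -> e * x * (1 - e) = 0) -> abelian_ring R.
Proof.
move=> corner0 e ide x; have := corner0 _ x (idem_compl ide); rewrite subKr => xe0.
rewrite -[e * x]mulr1 -(subrK e 1) mulrDr corner0 // add0r.
by rewrite -[x * e]mul1r -(subrK e 1) mulrA mulrDl mulrDl xe0 add0r.
Qed.

Lemma char_exists N : (0 < N)%N -> N%:R = 0 :> R -> exists c, char_is R c.
Proof.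
move=> N_gt0 NR; have exN : exists m, (0 < m)%N && (m%:R == 0 :> R).
  by exists N; rewrite N_gt0 NR eqxx.
have [c /andP[c_gt0 /eqP cR] c_min] := ex_minnP exN.
by exists c; split=> // m m_gt0 mR; apply: c_min; rewrite m_gt0 mR eqxx.
Qed.

Lemma char_is_unique c d : char_is R c -> char_is R d -> c = d.
Proof.
move=> [c_gt0 cR c_min] [d_gt0 dR d_min].
by apply/eqP; rewrite eqn_leq c_min // d_min.
Qed.

Lemma char_is_pchar p : p \in [pchar R] -> char_is R p.
Proof.
move=> pR; have p_prime := pcharf_prime pR.
split; [exact: prime_gt0 | exact: pcharf0 |].
by move=> m m_gt0 mR; apply: dvdn_leq => //; rewrite (dvdn_pcharf pR) mR.
Qed.

Lemma nil_index_exists I N :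
  (forall r, I r -> r ^+ N = 0) -> exists k, nil_of_index I k /\ (k <= N)%N.
Proof.
move=> IN; have exN : exists m, `[< forall r, I r -> r ^+ m = 0 >].
  by exists N; apply/asboolP.
have [k /asboolP Ik k_min] := ex_minnP exN.
by exists k; do !split=> //; [move=> m Im | ]; apply: k_min; apply/asboolP.
Qed.

Lemma expr_collision (T : finType) (E : T -> R) x :
  (forall m, exists t, E t = x ^+ m) ->
  exists a b, [/\ (a < b)%N, (b <= #|T|)%N & x ^+ a = x ^+ b].
Proof.
move=> Ex; pose f (i : 'I_#|T|.+1) := projT1 (cid (Ex i)).
have fE i : E (f i) = x ^+ i by rewrite /f; case: cid.
have /injectivePn[a [b neab fab]] : ~~ injectiveb f.
  by apply/injectiveP => /leq_card; rewrite card_ord ltnn.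
have xab : x ^+ a = x ^+ b by rewrite -!fE fab.
have [ltab|ltba|/val_inj eqab] := ltngtP a b; last by rewrite eqab eqxx in neab.
  by exists a, b; split=> //; rewrite -ltnS.
by exists b, a; split=> //; rewrite -ltnS.
Qed.

End RingFacts.

Section PowersSpan.
Variables (R : nzRingType) (c n : nat) (x : R).
Hypotheses (c_gt0 : (0 < c)%N) (natrc : c%:R = 0 :> R).

Definition powers_comb (v : {ffun 'I_n -> 'I_c}) : R := \sum_(i < n) x ^+ i *+ v i.

Definition in_powers_span (y : R) : Prop := exists v, powers_comb v = y.

Lemma mulrn_modn (y : R) m : y *+ (m %% c) = y *+ m.
Proof.
by rewrite {2}(divn_eq m c) mulrnDr mulrnA -[_ *+ c]mulr_natr natrc mulr0 add0r.
Qed.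

Lemma powers_span0 : in_powers_span 0.
Proof.
by exists [ffun => Ordinal c_gt0]; rewrite /powers_comb big1 // => i _; rewrite ffunE.
Qed.

Lemma powers_spanD y z : in_powers_span y -> in_powers_span z -> in_powers_span (y + z).
Proof.
move=> [v <-] [w <-]; exists [ffun i => Ordinal (ltn_pmod (v i + w i) c_gt0)].
rewrite /powers_comb -big_split; apply: eq_bigr => i _.
by rewrite ffunE mulrn_modn mulrnDr.
Qed.

Lemma powers_spanN y : in_powers_span y -> in_powers_span (- y).
Proof.
move=> [v <-]; exists [ffun i => Ordinal (ltn_pmod (c - v i) c_gt0)].
rewrite /powers_comb -sumrN; apply: eq_bigr => i _.
by rewrite ffunE mulrn_modn mulrnBr 1?ltnW // -[_ *+ c]mulr_natr natrc mulr0 sub0r.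
Qed.

Lemma powers_spanMn y m : in_powers_span y -> in_powers_span (y *+ m).
Proof.
move=> yS; elim: m => [|m IH]; first exact: powers_span0.
by rewrite mulrS; apply: powers_spanD.
Qed.

Lemma powers_span_sum k (F : 'I_k -> R) :
  (forall i, in_powers_span (F i)) -> in_powers_span (\sum_(i < k) F i).
Proof.
by move=> FS; apply: big_ind => //; [exact: powers_span0 | exact: powers_spanD].
Qed.

Lemma powers_span_expr i : (i < n)%N -> in_powers_span (x ^+ i).
Proof.
move=> lt_in; pose i' := Ordinal lt_in.
exists [ffun k : 'I_n => Ordinal (ltn_pmod (k == i') c_gt0)].
rewrite /powers_comb (bigD1 i') //= big1 ?addr0 => [|k /negbTE nek].
  by rewrite ffunE /= mulrn_modn eqxx.
by rewrite ffunE /= mulrn_modn nek.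
Qed.

Lemma powers_span_signed_expr i k : (i < n)%N -> in_powers_span (x ^+ i * (-1) ^+ k).
Proof.
move=> lt_in; rewrite -signr_odd.
case: (odd k); rewrite ?mulrN1 ?mulr1; last exact: powers_span_expr.
exact/powers_spanN/powers_span_expr.
Qed.

Lemma powers_span_of_sub1_expn :
  (0 < n)%N -> (x - 1) ^+ n = 1 -> in_powers_span (x ^+ n).
Proof.
move=> n_gt0; rewrite exprDn_comm; last exact: commrN1.
rewrite big_ord_recl subn0 expr0 mulr1 bin0 mulr1n => /(canRL (addrK _)) ->.
apply: powers_spanD; first by rewrite -(expr0 x); apply: powers_span_expr.
apply/powers_spanN/powers_span_sum => i; apply/powers_spanMn/powers_span_signed_expr.
by rewrite ltn_subrL n_gt0 andbT.
Qed.

Lemma powers_span_mulx y :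
  in_powers_span (x ^+ n) -> in_powers_span y -> in_powers_span (y * x).
Proof.
move=> xnS [v <-]; rewrite /powers_comb mulr_suml; apply: powers_span_sum => i.
rewrite mulrnAl -exprSr; apply: powers_spanMn.
have [|le_ni] := ltnP i.+1 n; first exact: powers_span_expr.
suff -> : i.+1 = n by [].
by apply/eqP; rewrite eqn_leq ltn_ord.
Qed.

Lemma powers_span_exprX m : in_powers_span (x ^+ n) -> in_powers_span (x ^+ m).
Proof.
move=> xnS; elim: m => [|m IH]; last by rewrite exprSr; apply: powers_span_mulx.
by have [n0|/powers_span_expr//] := posnP n; rewrite -n0.
Qed.

End PowersSpan.

Section Jacobson.
Variable R : nzRingType.
Implicit Types (x y : R) (I : set R).

Lemma exists_maximal_left_ideal I :
  left_ideal I -> ~ I 1 -> exists M, maximal_left_ideal M /\ I `<=` M.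
Proof.
move=> idI I1; pose Q X := [/\ left_ideal X, ~ X 1 & I `<=` X].
(* [set0] is admitted so that the empty chain also has its union in the family. *)
have [|A [PA Amax]] := @Zorn_bigcup R (fun X => X = set0 \/ Q X).
  move=> F FP Ftot.
  have QF X x : F X -> X x -> Q X by case/FP => [-> //|].
  have [[X0 FX0 [[X00 _ _] _ IX0]]|noQ] := pselect (exists2 X, F X & Q X).
    right; split; [split| |].
    - by exists X0.
    - move=> x y [X FX Xx] [Y FY Yy].
      have [[[_ XB _] _ _] [[_ YB _] _ _]] := (QF X x FX Xx, QF Y y FY Yy).
      have [XY|YX] := Ftot X Y FX FY.
        by exists Y => //; apply: YB => //; apply: XY.
      by exists X => //; apply: XB => //; apply: YX.
    - move=> r x [X FX Xx]; have [[_ _ XM] _ _] := QF X x FX Xx.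
      by exists X => //; apply: XM.
    - by move=> [X FX X1]; case: (QF X 1 FX X1) => _ /(_ X1).
    - by move=> x /IX0 X0x; exists X0.
  left; apply/seteqP; split=> // x [X FX Xx].
  by apply: noQ; exists X => //; apply: QF Xx.
have {PA} [idA A1 IA] : Q A.
  case: PA => [A0|] //; exfalso; apply: (Amax I); last by right; split.
  by rewrite A0; split=> [x []|/(_ 0)]; case: idI => I0 _ _ /(_ I0).
exists A; split=> //; split=> // K idK AK.
have [K1|K1] := pselect (K 1).
  by right=> x; case: idK => _ _ KM; rewrite -[x]mulr1; apply: KM.
have [KA|KA] := pselect (K `<=` A); [by left | exfalso].
by apply: (Amax K); [split | right; split=> // x /IA /AK].
Qed.

Lemma jacobsonM r x : jacobson x -> jacobson (r * x).
Proof. by move=> Jx M MM; case: (MM) => [[_ _ MM'] _ _]; apply: MM'; apply: Jx. Qed.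

Lemma jacobsonX x k : jacobson x -> (0 < k)%N -> jacobson (x ^+ k).
Proof. by case: k => // k Jx _; rewrite exprSr; apply: jacobsonM. Qed.

Lemma jacobson_left_inv y : jacobson y -> exists w, w * (1 - y) = 1.
Proof.
move=> Jy; pose I x := exists r, x = r * (1 - y).
have [[w /esym w1] //|I1] := pselect (I 1); first by exists w.
have [M [maxM IM]] : exists M, maximal_left_ideal M /\ I `<=` M.
  apply: exists_maximal_left_ideal I1; split.
  - by exists 0; rewrite mul0r.
  - by move=> _ _ [r ->] [s ->]; exists (r - s); rewrite mulrBl.
  - by move=> r _ [s ->]; exists (r * s); rewrite mulrA.
have [[M0 MB _] M1 _] := maxM.
have M1y : M (1 - y) by apply: IM; exists 1; rewrite mul1r.
case: M1; have := MB _ _ M1y (MB _ _ M0 (Jy _ maxM)).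
by rewrite sub0r opprK subrK.
Qed.

Lemma jacobson_unit y : jacobson y -> is_unit (1 - y).
Proof.
(* [w = 1 + w y] has a left inverse too, which must be its right inverse [1 - y]. *)
move=> Jy; have [w w1] := jacobson_left_inv Jy.
have [w' w'w] : exists w', w' * w = 1.
  have -> : w = 1 - - (w * y) by rewrite opprK -{1}w1 mulrBr mulr1 subrK.
  by apply: jacobson_left_inv; rewrite -mulNr; apply: jacobsonM.
have w'E : w' = 1 - y by rewrite -[w']mulr1 -{1}w1 mulrA w'w mul1r.
by exists w; split; rewrite // -w'E.
Qed.

Lemma jacobson_idem (f : R) : jacobson f -> idem f -> f = 0.
Proof.
move=> Jf idf; have [w w1] := jacobson_left_inv Jf.
by rewrite -[f]mul1r -w1 -mulrA mulr_compl_idem // mulr0.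
Qed.

End Jacobson.

Section CleanDecomposition.
Variables (R : nzRingType) (e u : R).
Hypotheses (ide : idem e) (eu : e * u = u * e).

Lemma comm_compl_unit : GRing.comm (1 - e) u.
Proof. by rewrite /GRing.comm mulrBl mulrBr mul1r mulr1 eu. Qed.

Lemma comm_compl_clean : GRing.comm (1 - e) (e + u).
Proof.
rewrite /GRing.comm [(1 - e) * _]mulrDr [(e + u) * _]mulrDl.
rewrite mulr_compl_idem // mulr_idem_compl // !add0r.
exact: comm_compl_unit.
Qed.

Lemma compl_mul_clean_expr k : (1 - e) * (e + u) ^+ k = (1 - e) * u ^+ k.
Proof.
apply: mulr_expr_eq; last exact/commr_sym/comm_compl_unit.
  by rewrite mulrDr mulr_compl_idem // add0r.
exact/commr_sym/comm_compl_clean.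
Qed.

Lemma idem_mul_clean_sub1_expr k : e * (e + u - 1) ^+ k = e * u ^+ k.
Proof.
apply: mulr_expr_eq; last by rewrite /GRing.comm eu.
  by rewrite mulrBr mulrDr ide mulr1 addrAC subrr add0r.
by rewrite /GRing.comm mulrBl mulrBr mulrDl mulrDr ide mul1r mulr1 eu.
Qed.

(* [1 - e] kills the first factor and [e] the second. *)
Lemma clean_identity n : u ^+ n = 1 ->
  ((e + u) ^+ n - 1) * ((e + u - 1) ^+ n - 1) = 0.
Proof.
move=> un; set r := e + u.
have compl_r : (r ^+ n - 1) * (1 - e) = 0.
  rewrite mulrBl mul1r -(commrX n comm_compl_clean) compl_mul_clean_expr.
  by rewrite un mulr1 subrr.
have idem_r : e * ((r - 1) ^+ n - 1) = 0.
  by rewrite mulrBr mulr1 idem_mul_clean_sub1_expr un mulr1 subrr.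
have -> : r ^+ n - 1 = (r ^+ n - 1) * ((1 - e) + e) by rewrite subrK mulr1.
by rewrite (mulrDr _ (1 - e) e) mulrDl compl_r mul0r add0r -mulrA idem_r mulr0.
Qed.

Hypothesis u_unit : is_unit u.

Lemma nilpotent_clean_idem1 k : (e + u) ^+ k = 0 -> e = 1.
Proof.
move=> nil; apply/eqP; rewrite eq_sym -subr_eq0; apply/eqP.
apply: (is_unit_mulr_eq0 (is_unit_expr k u_unit)).
by rewrite -compl_mul_clean_expr nil mulr0.
Qed.

Lemma jacobson_clean_idem1 : jacobson (e + u) -> e = 1.
Proof.
move=> Jr; have [v [uv vu]] := u_unit.
apply/eqP; rewrite eq_sym -subr_eq0; apply/eqP/jacobson_idem; last exact: idem_compl.
have -> : 1 - e = v * (1 - e) * (e + u).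
  by rewrite -mulrA mulrDr mulr_compl_idem // add0r comm_compl_unit mulrA vu mul1r.
exact: jacobsonM.
Qed.

End CleanDecomposition.

Section StronglyTorsionClean.
Variables (R : nzRingType) (n : nat).
Hypothesis hR : strongly_ntc_ring R n.
Implicit Types (r x j w : R).

Lemma strongly_ntc_gt0 : (0 < n)%N.
Proof. by case: hR. Qed.

Lemma strongly_ntc_identity r : (r ^+ n - 1) * ((r - 1) ^+ n - 1) = 0.
Proof. by case: hR => _ /(_ r) [e [u [ide _ un eu ->]]] _; apply: clean_identity. Qed.

Lemma strongly_ntc_char : exists c, char_is R c.
Proof.
have n_gt0 := strongly_ntc_gt0.
apply: (@char_exists _ ((3 ^ n - 1) * (2 ^ n - 1))).
  by rewrite muln_gt0 !subn_gt0 !(leq_ltn_trans n_gt0 (ltn_expl _ _)).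
rewrite natrM !natrB ?expn_gt0 // !natrX (_ : 2%:R = 3%:R - 1).
  exact: strongly_ntc_identity.
by rewrite -(natrB _ (isT : (1 <= 3)%N)).
Qed.

Lemma nilpotent_sub1_expn x k : x ^+ k = 0 -> (x - 1) ^+ n = 1.
Proof.
case: hR => _ /(_ x) [e [u [ide uu un eu ->]]] _ nil.
by rewrite (nilpotent_clean_idem1 ide eu uu nil) addrC addKr.
Qed.

Lemma jacobson_sub1_expn j : jacobson j -> (j - 1) ^+ n = 1.
Proof.
case: hR => _ /(_ j) [e [u [ide uu un eu ->]]] _ Jj.
by rewrite (jacobson_clean_idem1 ide eu uu Jj) addrC addKr.
Qed.

Lemma signr_expn : (-1) ^+ n = 1 :> R.
Proof. by have := @nilpotent_sub1_expn 0 1 (expr1 0); rewrite sub0r. Qed.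

Lemma one_sub_expn x : (x - 1) ^+ n = 1 -> (1 - x) ^+ n = 1.
Proof. by move=> xn; rewrite -opprB exprNn signr_expn mul1r. Qed.

(* The powers of [j] range over the [c ^ n] combinations [powers_comb], so two
   of them coincide; as [1 - j ^+ i] is a unit, this forces [j] nilpotent. *)
Lemma jacobson_expr_eq0 c j : char_is R c -> jacobson j -> j ^+ (c ^ n).-1 = 0.
Proof.
move=> [c_gt0 natrc _] Jj.
have jnS := powers_span_of_sub1_expn c_gt0 natrc strongly_ntc_gt0
  (jacobson_sub1_expn Jj).
have [a [b [lt_ab le_b jab]]] :=
  expr_collision (fun m => powers_span_exprX c_gt0 natrc m jnS).
rewrite card_ffun !card_ord in le_b.
have ja0 : j ^+ a = 0.
  have Jba : jacobson (j ^+ (b - a)) by apply: jacobsonX; rewrite // subn_gt0.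
  apply: (is_unit_mulr_eq0 (jacobson_unit Jba)).
  by rewrite mulrBr mulr1 -exprD subnKC ?(ltnW lt_ab) // jab subrr.
apply: expr_eq0_leq ja0 _.
by rewrite -ltnS prednK ?expn_gt0 ?c_gt0 // (leq_trans lt_ab).
Qed.

Lemma jacobson_nil_index c : char_is R c ->
  exists k, nil_of_index (@jacobson R) k /\ (k < c ^ n)%N.
Proof.
move=> hc; have [k [Jk le_k]] := nil_index_exists (fun j => @jacobson_expr_eq0 c j hc).
exists k; split=> //; apply: leq_ltn_trans le_k _.
by rewrite ltn_predL expn_gt0; case: hc => ->.
Qed.

Lemma odd_pchar2 : odd n -> 2 \in [pchar R].
Proof.
move=> odd_n; have := signr_expn; rewrite -signr_odd odd_n expr1 => N1.
by rewrite inE /= mulr2n addr_eq0 N1.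
Qed.

Lemma odd_reduced : odd n -> reduced_ring R.
Proof.
move=> odd_n x k xk.
have := pchar_nilpotent_expr_gcdn (odd_pchar2 odd_n) xk strongly_ntc_gt0
  (one_sub_expn (nilpotent_sub1_expn xk)).
by rewrite (eqP (coprimeXr _ _)) ?coprimen2 // expr1.
Qed.

Lemma jacobson_nil_index_pchar p : p \in [pchar R] ->
  exists k, nil_of_index (@jacobson R) k /\ (k <= n)%N.
Proof.
move=> pR; have [c hc] := strongly_ntc_char.
apply: nil_index_exists => j Jj.
have := pchar_nilpotent_expr_gcdn pR (jacobson_expr_eq0 hc Jj) strongly_ntc_gt0
  (one_sub_expn (jacobson_sub1_expn Jj)).
by move/expr_eq0_leq; apply; apply/dvdn_leq/dvdn_gcdl; exact: strongly_ntc_gt0.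
Qed.

Lemma abelian_of_natr_linv w : w * n%:R = 1 -> abelian_ring R.
Proof.
move=> wn; apply: abelian_of_corners => e x ide.
have a2 := idem_corner_sq0 x ide; set a := e * x * (1 - e) in a2 *.
have : (1 - a) ^+ n = 1.
  by apply/one_sub_expn/(@nilpotent_sub1_expn _ 2); rewrite expr2.
rewrite one_sub_expr_sq0 // -[X in _ = X]subr0 => /addrI/oppr_inj an0.
by rewrite -[a]mul1r -wn -mulrA mulr_natl an0 mulr0.
Qed.

End StronglyTorsionClean.

Unset Implicit Arguments.

Theorem theorem2p4 (R : nzRingType) (n : nat) (hR : strongly_ntc_ring R n) :
  (* (1) *)
  (forall r : R, (r ^+ n - 1) * ((r - 1) ^+ n - 1) = 0) /\
  (* (2) finite characteristic c *)
  (exists c : nat, char_is R c /\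
     (* (3) *)
     (exists k : nat, nil_of_index (@jacobson R) k /\ (k < c ^ n)%N) /\
     (* (4) *)
     (odd n -> [/\ reduced_ring R, c = 2%N & forall x : R, jacobson x -> x = 0])) /\
  (* (5) R an algebra over a field F, given by a ring morphism with central image *)
  (forall (F : fieldType) (phi : {rmorphism F -> R}),
     (forall (a : F) (x : R), phi a * x = x * phi a) ->
     (exists k : nat, nil_of_index (@jacobson R) k /\ (k <= n)%N) /\
     (abelian_ring R \/ exists cF : nat, char_is F cF /\ (cF %| n)%N)).
Proof.
have [c hc] := strongly_ntc_char hR.
split; first exact: strongly_ntc_identity.
split.
  exists c; split; [exact: hc | split; first exact: jacobson_nil_index].
  move=> odd_n; have red := odd_reduced hR odd_n.
  split=> //; first exact: char_is_unique hc (char_is_pchar (odd_pchar2 hR odd_n)).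
  by move=> x /(jacobson_expr_eq0 hR hc); apply: red.
move=> F phi _; have [c_gt0 natrc _] := hc.
have [p pF] : exists p, p \in [pchar F].
  by apply: (natf0_pchar c_gt0); rewrite -(fmorph_eq0 phi) rmorph_nat natrc.
have pR : p \in [pchar R] by rewrite (fmorph_pchar phi).
split; first exact: jacobson_nil_index_pchar pR.
have [p_dvd_n|p_ndvd_n] := boolP (p %| n)%N.
  by right; exists p; split; [exact: char_is_pchar|].
left; apply: (abelian_of_natr_linv hR (w := phi n%:R^-1)).
by rewrite -(rmorph_nat phi) -rmorphM mulVf ?rmorph1 // -(dvdn_pcharf pF).
Qed.
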